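(* Let $v\in T$ be a point with at least one irrational coordinate, with itinerary $\mathbb{X}_{a_1},\mathbb{X}_{a_2},\dots$. For $n\ge1$ let $\mathbf{I}_{v,n} = \mathbf{X}_{a_1}^{-1}\mathbf{X}_{a_2}^{-1}\cdots\mathbf{X}_{a_n}^{-1}$ and let $\mathbf{I}_{v,n}V$ be the $3\times 3$ integer matrix with $V = \begin{pmatrix}0&1&1\\0&0&1\\1&1&1\end{pmatrix}$. Then the closed tetrahedron in $\mathbb{R}^3$ whose vertices are the origin and the three columns of $\mathbf{I}_{v,n}V$ contains no point of $\mathbb{Z}^3$ other than its four vertices.
   Context: Let $T = \{(x,y)\in\mathbb{R}^2 : 0 \le y \le x \le 1\}$. For integers $n\ge1$ define $\mathbb{A}_n = \{(x,y) : \frac{1}{n+1} < x \le \frac1n,\ 0 \le y \le 1-nx\}$ and $\mathbb{B}_n = \{(x,y) : 1-nx < y \le x \le \frac1n\}$, and the matrices $\mathbf{A}_n = \begin{pmatrix}-n&0&1\\0&1&0\\1&0&0\end{pmatrix}$, $\mathbf{B}_n=\begin{pmatrix}1-n&-1&1\\1&-1&0\\1&0&0\end{pmatrix}$ (both in $SL(3,\mathbb{Z})$). The 2-dimensional Gauss map $G:T\to T$ is $G(0,0)=(0,0)$ and, writing points as homogeneous vectors $(x,y,1)^T$, $G(v)=\mathbf{A}_n v$ on $\mathbb{A}_n$ and $G(v)=\mathbf{B}_n v$ on $\mathbb{B}_n$ (up to scaling); in affine coordinates $G(x,y)=\left(\frac1x-n,\frac yx\right)$ on $\mathbb{A}_n$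 and $G(x,y)=\left(\frac{1-y}{x}-n+1,\frac{x-y}{x}\right)$ on $\mathbb{B}_n$. For a point $v$ whose forward orbit never hits $(0,0)$, its itinerary is the sequence $\mathbb{X}_{a_1},\mathbb{X}_{a_2},\dots$ ($\mathbb{X}\in\{\mathbb{A},\mathbb{B}\}$) with $G^{k-1}(v)\in\mathbb{X}_{a_k}$, and $\mathbf{X}_{a_k}$ denotes the corresponding matrix $\mathbf{A}_{a_k}$ or $\mathbf{B}_{a_k}$. *)

From HB Require Import structures.
From mathcomp Require Import all_boot all_order all_algebra.
From Stdlib Require Import Reals QArith Qreals.
Set Implicit Arguments. Unset Strict Implicit. Unset Printing Implicit Defensive.
Local Open Scope R_scope.

Definition inT (p : R * R) : Prop :=
  (0 <= snd p /\ snd p <= fst p /\ fst p <= 1).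

(* A region label: (true, n) stands for A_n, (false, n) for B_n. *)
Definition region := (bool * nat)%type.

Definition in_region (r : region) (p : R * R) : Prop :=
  let (isA, n) := r in
  let x := fst p in let y := snd p in
  (1 <= n)%coq_nat /\
  if isA then
    (/ INR n.+1 < x /\ x <= / INR n /\ 0 <= y /\ y <= 1 - INR n * x)
  else
    (1 - INR n * x < y /\ y <= x /\ x <= / INR n).

(* G(0,0) = (0,0); for x > 0 with n = floor(1/x): the A_n formula if
   y <= 1 - n x, otherwise the B_n formula.  On T this is exactly the
   piecewise definition of G. *)
Definition G (p : R * R) : R * R :=
  let x := fst p in let y := snd p in
  match Rlt_dec 0 x with
  | left _ =>
      let n := INR (Z.to_nat (Int_part (/ x))) in
      match Rle_dec y (1 - n * x) with
      | left _ => (/ x - n, y / x)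
      | right _ => ((1 - y) / x - n + 1, (x - y) / x)
      end
  | right _ => (0, 0)
  end.

(* itinerary: a k is the label X_{a_{k+1}} with G^k(v) in X_{a_{k+1}} *)
Definition is_itinerary (v : R * R) (a : nat -> region) : Prop :=
  forall k : nat, in_region (a k) (iter k G v).

Definition irrational (x : R) : Prop := ~ (exists q : Q, Q2R q = x).

Local Open Scope ring_scope.
Local Close Scope R_scope.

Definition mx3 (a b c d e f g h i : int) : 'M[int]_3 :=
  \matrix_(r < 3, s < 3)
    nth 0 (nth [::] [:: [:: a; b; c]; [:: d; e; f]; [:: g; h; i]] r) s.

Definition Amat (n : nat) : 'M[int]_3 :=
  mx3 (- n%:Z) 0 1  0 1 0  1 0 0.
Definition Bmat (n : nat) : 'M[int]_3 :=
  mx3 (1 - n%:Z) (-1) 1  1 (-1) 0  1 0 0.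

Definition Xmat (r : region) : 'M[int]_3 :=
  if r.1 then Amat r.2 else Bmat r.2.

Definition Vmat : 'M[int]_3 := mx3 0 1 1  0 0 1  1 1 1.

Definition Imat (a : nat -> region) (n : nat) : 'M[int]_3 :=
  \prod_(k < n) invmx (Xmat (a k)).

Local Close Scope ring_scope.
Local Open Scope R_scope.
Definition intR (z : int) : R :=
  match z with
  | Posz m => INR m
  | Negz m => - (INR m + 1)
  end.

Definition i0 : 'I_3 := @Ordinal 3 0 isT.
Definition i1 : 'I_3 := @Ordinal 3 1 isT.
Definition i2 : 'I_3 := @Ordinal 3 2 isT.

(* the closed tetrahedron in R^3 with vertices the origin and the three
   columns of M (= convex hull of these four points) *)
Definition in_tetra (M : 'M[int]_3) (p : 'I_3 -> R) : Prop :=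
  exists l : 'I_3 -> R,
    (forall j, 0 <= l j) /\ (l i0 + l i1 + l i2 <= 1) /\
    forall i, p i = l i0 * intR (M i i0) + l i1 * intR (M i i1)
                    + l i2 * intR (M i i2).

Definition is_vertex (M : 'M[int]_3) (z : 'I_3 -> int) : Prop :=
  (forall i, z i = Posz 0) \/ exists j : 'I_3, forall i, z i = M i j.

(* The matrix I_{v,n} V is a product of matrices of determinant +-1, hence
   invertible over Z.  The barycentric coordinates of a point z of the
   tetrahedron are then the entries of (I_{v,n} V)^-1 z, which are integers
   when z is a lattice point.  Nonnegative integers with sum at most 1 are
   either all 0 (z is the origin) or a single 1 with zeros elsewhere (z is a
   column of I_{v,n} V). *)
From Stdlib Require Import Reals QArith Qreals.
From HB Require Import structures.
From mathcomp Require Import all_boot all_order all_algebra zify.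
From mathcomp Require Import Rstruct.
Set Implicit Arguments.
Unset Strict Implicit.
Unset Printing Implicit Defensive.

Import Order.TTheory GRing.Theory Num.Theory.
Local Open Scope ring_scope.

Lemma nonneg_int_col_sum_le1 n (c : 'cV[int]_n) :
  (forall i, 0 <= c i 0) -> \sum_i c i 0 <= 1 ->
  c = 0 \/ exists j, c = delta_mx j 0.
Proof.
move=> c_ge0 sum_le1.
case: (pickP (fun j => c j 0 != 0)) => [j cj_neq0|c_eq0]; last first.
  by left; apply/matrixP => i k; rewrite ord1 mxE; apply/eqP/negbFE/c_eq0.
right; exists j.
move: sum_le1; rewrite (bigD1 j) //= => sum_le1.
have rest_ge0 : 0 <= \sum_(i < n | i != j) c i 0 by apply: sumr_ge0.
have cj1 : c j 0 = 1.
  apply: le_anti; rewrite -gtz0_ge1 lt0r cj_neq0 c_ge0 !andbT.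
  by apply: le_trans sum_le1; rewrite lerDl.
have /psumr_eq0P rest0 : \sum_(i < n | i != j) c i 0 = 0.
  by apply: le_anti; rewrite rest_ge0 -(gerDl 1) -{1}cj1 sum_le1.
apply/matrixP => i k; rewrite ord1 mxE eqxx andbT.
by case: eqP => [->|/eqP ij] //; rewrite rest0 // => i' _; apply: c_ge0.
Qed.

Lemma lattice_point_in_unimodular_simplex (R : numFieldType) n
    (M : 'M[int]_n) (z : 'cV[int]_n) (l : 'cV[R]_n) :
  M \in unitmx -> (forall j, 0 <= l j 0) -> \sum_j l j 0 <= 1 ->
  map_mx intr z = map_mx intr M *m l ->
  z = 0 \/ exists j, z = col j M.
Proof.
move=> uM l_ge0 sum_le1 zE.
pose c := invmx M *m z.
have cE : map_mx intr c = l.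
  by rewrite map_mxM zE mulmxA -map_mxM mulVmx // map_mx1 mul1mx.
have lE j : l j 0 = (c j 0)%:~R by rewrite -cE mxE.
have c_ge0 j : 0 <= c j 0 by rewrite -(ler0z R) -lE.
have c_sum : \sum_j c j 0 <= 1.
  by rewrite -(ler_int R) rmorph_sum /=; under eq_bigr do rewrite -lE.
have -> : z = M *m c by rewrite mulmxA mulmxV // mul1mx.
case: (nonneg_int_col_sum_le1 c_ge0 c_sum) => [->|[j ->]].
- by left; rewrite mulmx0.
- by right; exists j; rewrite colE.
Qed.

Lemma unitmx_of_right_inverse n (A B : 'M[int]_n.+1) :
  A *m B = 1%:M -> A \in unitmx.
Proof. by move/mulmx1_unit => []. Qed.

Lemma sum3 (V : nmodType) (F : 'I_3 -> V) : \sum_(k < 3) F k = F i0 + F i1 + F i2.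
Proof.
rewrite !big_ord_recl big_ord0 addr0 addrA.
by congr (F _ + F _ + F _); apply: val_inj.
Qed.

Ltac mx3_compute := apply/matrixP; case=> [[|[|[|?]]] ?] //;
  case=> [[|[|[|?]]] ?] //; rewrite !mxE sum3 !mxE /=; lia.

Lemma Amat_unit n : Amat n \in unitmx.
Proof.
by apply: (@unitmx_of_right_inverse _ _ (mx3 0 0 1 0 1 0 1 0 n%:Z)); mx3_compute.
Qed.

Lemma Bmat_unit n : Bmat n \in unitmx.
Proof.
by apply: (@unitmx_of_right_inverse _ _ (mx3 0 0 1 0 (-1) 1 1 (-1) n%:Z));
  mx3_compute.
Qed.

Lemma Vmat_unit : Vmat \in unitmx.
Proof.
by apply: (@unitmx_of_right_inverse _ _ (mx3 (-1) 0 1 1 (-1) 0 0 1 0));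
  mx3_compute.
Qed.

Lemma Xmat_unit r : Xmat r \in unitmx.
Proof. by case: r => [[] m]; [apply: Amat_unit | apply: Bmat_unit]. Qed.

Lemma Imat_unit a n : Imat a n \in unitmx.
Proof.
apply: (big_ind (fun A : 'M[int]_3 => A \in unitmx)) => [|A B uA uB|k _].
- exact: unitmx1.
- by rewrite -mulmxE unitmx_mul uA uB.
- by rewrite unitmx_inv Xmat_unit.
Qed.

Lemma intRE (x : int) : intR x = x%:~R.
Proof.
case: x => m /=; first by rewrite INRE.
by rewrite NegzE rmorphN /= INRE RoppE RplusE intS rmorphD rmorph1 addrC.
Qed.

Lemma is_vertex_unimodular (M : 'M[int]_3) (z : 'I_3 -> int) :
  M \in unitmx -> in_tetra M (fun i => intR (z i)) -> is_vertex M z.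
Proof.
move=> uM [l [l_ge0 [sum_le1 zE]]].
have zcolE : map_mx intr (\col_i z i) = map_mx intr M *m \col_j l j.
  apply/matrixP => i k; rewrite !mxE sum3 !mxE -intRE zE !RplusE !RmultE !intRE.
  by rewrite (mulrC (l i0)) (mulrC (l i1)) (mulrC (l i2)).
have l_ge0' j : 0 <= (\col_j l j) j 0 :> R by rewrite mxE; apply/RleP.
have sum_le1' : \sum_j (\col_j l j) j 0 <= 1 :> R.
  by rewrite sum3 !mxE; apply/RleP.
case: (lattice_point_in_unimodular_simplex uM l_ge0' sum_le1' zcolE) => [z0|[j zj]].
- by left => i; move/matrixP/(_ i 0): z0; rewrite mxE => ->; rewrite mxE.
- by right; exists j => i; move/matrixP/(_ i 0): zj; rewrite !mxE.
Qed.

(* Only the unimodularity of I_{v,n} V matters: the conclusion holds for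
   every sequence of labels. *)
Theorem mainTheorem12 (v : R * R) (a : nat -> region) (n : nat) :
  inT v -> (irrational (fst v) \/ irrational (snd v)) ->
  is_itinerary v a -> (1 <= n)%coq_nat ->
  forall z : 'I_3 -> int,
    in_tetra (mulmx (Imat a n) Vmat) (fun i => intR (z i)) ->
    is_vertex (mulmx (Imat a n) Vmat) z.
Proof.
move=> _ _ _ _ z; apply: (@is_vertex_unimodular (Imat a n *m Vmat) z).
by rewrite unitmx_mul Imat_unit Vmat_unit.
Qed.
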